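(* In the standing setup, assume $A$ is generic and $\det f_0'(x)$ is not identically zero. Then for all $x\in\mathbb R^6$ and $\varepsilon\in\mathbb R$, $$\det(I-\varepsilon f_0'(x))=s_1(x,\varepsilon)s_2(x,\varepsilon)s_3(x,\varepsilon),$$ where $s_1=1-2\varepsilon^2(q_2+q_3)$, $s_2=1-2\varepsilon^2(q_1+q_3)$, $s_3=1-2\varepsilon^2(q_1+q_2)$.
   Context: Standing setup: $J=\begin{pmatrix}0&I_3\\-I_3&0\end{pmatrix}$ ($6\times6$). $A$ is a fixed real $6\times 6$ skew-Hamiltonian matrix ($A^{\rm T}J=JA$). $H_0$ is a homogeneous cubic polynomial on $\mathbb R^6$ with $A\nabla^2H_0(x)=\nabla^2H_0(x)A^{\rm T}$ for all $x$ ($\nabla^2$ = Hesse matrix), $f_0=J\nabla H_0$, with Jacobi matrix $f_0'$. Genericity: the characteristic polynomial of $A$ (a square of a cubic) has three pairwise distinct roots $\lambda_1,\lambda_2,\lambda_3$, each a double eigenvalue. $B_i=\alpha_iI+\beta_iA+\gamma_iA^2$ ($i=1,2,3$), where $\alpha_i+\beta_i\lambda+\gamma_i\lambda^2$ is the unique polynomial of degree $\le2$ equal to $-1$ at $\lambda_i$ and to $1$ at the other two eigenvalues. $q_i(x)=\tfrac18\operatorname{tr}(B_i^{\rm T}(f_0'(x))^2)$. *)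

(* Scalars live in a numeric closed field C (e.g. algC);
   "real" objects are those whose entries satisfy [\is Num.real]. *)
From HB Require Import structures.
From mathcomp Require Import all_boot all_order all_algebra.
Set Implicit Arguments. Unset Strict Implicit. Unset Printing Implicit Defensive.
Import Order.TTheory GRing.Theory Num.Theory.
Local Open Scope ring_scope.

(* J = [[0, I_3], [-I_3, 0]] as a 6x6 matrix (indices 0..5). *)
Definition Jmx (C : nzRingType) : 'M[C]_6 :=
  \matrix_(i < 6, j < 6)
    (if (i < 3)%N && (val j == val i + 3)%N then 1
     else if (3 <= i)%N && (val i == val j + 3)%N then -1 else 0).

(* A cubic form on C^6 given by coefficients c : H0(x) = sum c_ijk x_i x_j x_k
   (every homogeneous cubic arises this way). *)
Definition cubicH (C : nzRingType) (c : 'I_6 -> 'I_6 -> 'I_6 -> C) (x : 'I_6 -> C) : C :=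
  \sum_(i < 6) \sum_(j < 6) \sum_(k < 6) c i j k * x i * x j * x k.

(* Its Hesse matrix at x (formal second partial derivatives). *)
Definition hessH (C : nzRingType) (c : 'I_6 -> 'I_6 -> 'I_6 -> C) (x : 'I_6 -> C) : 'M[C]_6 :=
  \matrix_(a < 6, b < 6)
    \sum_(k < 6) (c a b k + c a k b + c b a k + c b k a + c k a b + c k b a) * x k.

(* Jacobi matrix of f0 = J grad H0 : f0'(x) = J * Hess H0(x). *)
Definition f0jac (C : nzRingType) (c : 'I_6 -> 'I_6 -> 'I_6 -> C) (x : 'I_6 -> C) : 'M[C]_6 :=
  Jmx C *m hessH c x.

Definition Bmx (C : nzRingType) (A : 'M[C]_6) (al be ga : C) : 'M[C]_6 :=
  al%:M + be *: A + ga *: (A *m A).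

Definition qfun (C : fieldType) (B : 'M[C]_6) (c : 'I_6 -> 'I_6 -> 'I_6 -> C) (x : 'I_6 -> C) : C :=
  8%:R^-1 * \tr (B^T *m (f0jac c x *m f0jac c x)).

Definition o1 : 'I_3 := @Ordinal 3 0 isT.
Definition o2 : 'I_3 := @Ordinal 3 1 isT.
Definition o3 : 'I_3 := @Ordinal 3 2 isT.

From HB Require Import structures.
From mathcomp Require Import all_boot all_order all_algebra.
From mathcomp Require Import mxred spectral ring.
Import Order.TTheory GRing.Theory Num.Theory.
Local Open Scope ring_scope.
Set Implicit Arguments. Unset Strict Implicit. Unset Printing Implicit Defensive.

(* Write M := f0'(x) = J S with S the Hesse matrix and N := M^T.  The commutation
   hypotheses make A and N commute, so they are simultaneously (unitarily)
   triangularisable; let t_j, n_j be the diagonals of A and N in such a basis.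
   As A is skew-Hamiltonian, p(A)^T J = J p(A) for every polynomial p, and with
   J^T = -J, S^T = S this forces tr(p(A) N) = 0, i.e. sum_j p(t_j) n_j = 0 for all p.
   Taking for p a polynomial vanishing at all eigenvalues but lambda_i shows that the
   n_j along the level set {j | t_j = lambda_i}, which has exactly two elements,
   sum to zero.  Hence each level contributes 1 - eps^2 w_i / 2 to
   det(I - eps M) = prod_j (1 - eps n_j), where w_i is the sum of the n_j^2 along it,
   while 8 q_i = sum_k B_i(lambda_k) w_k with B_i(lambda_k) = -1 or 1, so that
   q_j + q_k = w_i / 4 whenever {i, j, k} = {1, 2, 3}. *)

Section Triangular.
Variables (R : comNzRingType) (n : nat).
Implicit Types X Y : 'M[R]_n.

Lemma mulmx_is_trig X Y : is_trig_mx X -> is_trig_mx Y -> is_trig_mx (X *m Y).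
Proof.
move=> /is_trig_mxP hX /is_trig_mxP hY; apply/is_trig_mxP => i j lt_ij.
rewrite mxE big1 // => k _.
have [le_ki | lt_ik] := leqP k i; last by rewrite hX ?mul0r.
by rewrite hY ?mulr0 // (leq_ltn_trans le_ki lt_ij).
Qed.

Lemma mulmx_trig_diag X Y i :
  is_trig_mx X -> is_trig_mx Y -> (X *m Y) i i = X i i * Y i i.
Proof.
move=> /is_trig_mxP hX /is_trig_mxP hY.
rewrite mxE (bigD1 i) //= big1 ?addr0 // => k neq_ki.
have [lt_ik | lt_ki | /val_inj eq_ik] := ltngtP i k.
- by rewrite hX ?mul0r.
- by rewrite hY ?mulr0.
- by rewrite eq_ik eqxx in neq_ki.
Qed.

Lemma mxtrace_mul_trig X Y :
  is_trig_mx X -> is_trig_mx Y -> \tr (X *m Y) = \sum_i X i i * Y i i.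
Proof. by move=> tX tY; apply: eq_bigr => i _; rewrite mulmx_trig_diag. Qed.

End Triangular.

Section HornerTriangular.
Variables (R : comNzRingType) (n : nat) (X : 'M[R]_n.+1).
Hypothesis tX : is_trig_mx X.

Lemma horner_mx_is_trig p : is_trig_mx (horner_mx X p).
Proof.
elim/poly_ind: p => [|p a IHp]; first by rewrite rmorph0 mx0_is_trig.
rewrite rmorphD rmorphM /= horner_mx_X horner_mx_C -mulmxE.
move: (mulmx_is_trig IHp tX) (scalar_mx_is_trig n.+1 a).
move=> /is_trig_mxP hP /is_trig_mxP hC; apply/is_trig_mxP => i j lt_ij.
by rewrite mxE hP // hC // addr0.
Qed.

Lemma horner_mx_trig_diag p i : horner_mx X p i i = p.[X i i].
Proof.
elim/poly_ind: p => [|p a IHp]; first by rewrite rmorph0 horner0 mxE.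
rewrite rmorphD rmorphM /= horner_mx_X horner_mx_C -mulmxE mxE.
rewrite mulmx_trig_diag ?horner_mx_is_trig // IHp.
by rewrite !hornerE mxE eqxx mulr1n.
Qed.

End HornerTriangular.

Section UnitConjugation.
Variables (F : fieldType) (n : nat) (V : 'M[F]_n).
Hypothesis V_unit : V \in unitmx.

Lemma conjmx_mul f g : conjmx V (f *m g) = conjmx V f *m conjmx V g.
Proof. by rewrite conjmxM // inE stablemx_unit. Qed.

Lemma conjmx_scalar_sub a e f :
  conjmx V (a%:M - e *: f) = a%:M - e *: conjmx V f.
Proof.
rewrite !conjumx // mulmxBr mulmxBl scalar_mxC mulmxK //.
by rewrite -scalemxAr -scalemxAl.
Qed.

Lemma mxtrace_conjmx f : \tr (conjmx V f) = \tr f.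
Proof. by rewrite conjumx // mxtrace_mulC mulmxA mulVmx // mul1mx. Qed.

Lemma det_conjmx f : \det (conjmx V f) = \det f.
Proof.
have detV : \det V != 0 by rewrite -unitfE -unitmxE.
by rewrite conjumx // !det_mulmx det_inv mulrAC mulfV ?mul1r.
Qed.

Lemma char_poly_conjmx f : char_poly (conjmx V f) = char_poly f.
Proof.
rewrite conjumx // /char_poly /char_poly_mx !map_mxM.
set W := map_mx polyC V; set W' := map_mx polyC (invmx V).
have WW' : W *m W' = 1%:M by rewrite -map_mxM mulmxV // map_mx1.
have -> : 'X%:M - W *m map_mx polyC f *m W' = W *m ('X%:M - map_mx polyC f) *m W'.
  by rewrite mulmxBr mulmxBl scalar_mxC -[_ *m W *m W']mulmxA WW' mulmx1.
by rewrite !det_mulmx mulrAC -det_mulmx WW' det1 mul1r.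
Qed.

End UnitConjugation.

Section HornerMxIntertwine.
Variables (R : comNzRingType) (n : nat).
Implicit Types X Y Z : 'M[R]_n.+1.

Lemma trmx_horner_mx X p : (horner_mx X p)^T = horner_mx X^T p.
Proof.
elim/poly_ind: p => [|p a IHp]; first by rewrite !rmorph0 trmx0.
rewrite !rmorphD !rmorphM /= !horner_mx_X !horner_mx_C -!mulmxE.
by rewrite linearD /= trmx_mul IHp tr_scalar_mx [X^T *m _]comm_mx_horner.
Qed.

Lemma horner_mx_intertwine X Y Z p :
  X *m Z = Z *m Y -> horner_mx X p *m Z = Z *m horner_mx Y p.
Proof.
move=> XZ; elim/poly_ind: p => [|p a IHp]; first by rewrite !rmorph0 mul0mx mulmx0.
rewrite !rmorphD !rmorphM /= !horner_mx_X !horner_mx_C -!mulmxE.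
by rewrite mulmxDl mulmxDr -mulmxA XZ !mulmxA IHp scalar_mxC.
Qed.

End HornerMxIntertwine.

Lemma mxtrace_skew_sym_mul (R : numDomainType) n (J S G : 'M[R]_n) :
  J^T = - J -> S^T = S -> G^T *m J = J *m G -> \tr (G *m (J *m S)^T) = 0.
Proof.
move=> skewJ symS GJ.
have -> : (J *m S)^T = - (S *m J) by rewrite trmx_mul symS skewJ mulmxN.
rewrite mulmxN raddfN /= mulmxA; apply/eqP; rewrite oppr_eq0.
set u := \tr _; have opp_u : u = - u.
  rewrite {1}/u mxtrace_mulC mulmxA -GJ -mxtrace_tr !trmx_mul trmxK symS skewJ.
  by rewrite mulNmx mulmxN raddfN /= mulmxA mxtrace_mulC mulmxA.
suff: u *+ 2 == 0 by rewrite mulrn_eq0.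
by rewrite mulr2n {2}opp_u subrr.
Qed.

Section SimultaneouslyTriangular.
Variables (F : fieldType) (n : nat) (A N P : 'M[F]_n.+1).
Hypotheses (P_unit : P \in unitmx) (trigA : is_trig_mx (conjmx P A))
  (trigN : is_trig_mx (conjmx P N)).

Lemma char_poly_trig_conjmx :
  char_poly A = \prod_(j < n.+1) ('X - (conjmx P A j j)%:P).
Proof. by rewrite -char_poly_trig // char_poly_conjmx. Qed.

Lemma mxtrace_horner_mul_trig p :
  \tr (horner_mx A p *m N) = \sum_j p.[conjmx P A j j] * conjmx P N j j.
Proof.
rewrite -(mxtrace_conjmx P_unit) conjmx_mul // -horner_mx_conj ?row_free_unit
  ?stablemx_unit // mxtrace_mul_trig ?horner_mx_is_trig //.
by apply: eq_bigr => j _; rewrite horner_mx_trig_diag.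
Qed.

Lemma mxtrace_sqr_mul_horner_trig p :
  \tr (N *m N *m horner_mx A p) = \sum_j p.[conjmx P A j j] * conjmx P N j j ^+ 2.
Proof.
rewrite mxtrace_mulC mulmxA -(mxtrace_conjmx P_unit) !conjmx_mul //.
rewrite -horner_mx_conj ?row_free_unit ?stablemx_unit //.
have trigNN := mulmx_is_trig trigN trigN.
rewrite -mulmxA (mxtrace_mul_trig (horner_mx_is_trig trigA p) trigNN).
by apply: eq_bigr => j _; rewrite horner_mx_trig_diag // (mulmx_trig_diag _ trigN) // expr2.
Qed.

Lemma det_scalar_sub_trig a e :
  \det (a%:M - e *: N) = \prod_j (a - e * conjmx P N j j).
Proof.
rewrite -(det_conjmx P_unit) conjmx_scalar_sub // det_trig.
  by apply: eq_bigr => j _; rewrite !mxE eqxx mulr1n.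
move: (conjmx P N) trigN => M /is_trig_mxP trigM; apply/is_trig_mxP => i j lt_ij.
by rewrite !mxE trigM // mulr0 -val_eqE (ltn_eqF lt_ij) subr0.
Qed.

End SimultaneouslyTriangular.

Lemma level_sum_eq0 (F : fieldType) (I : finType) (t w : I -> F) x :
  (forall p : {poly F}, \sum_j p.[t j] * w j = 0) -> \sum_(j | t j == x) w j = 0.
Proof.
pose p := \prod_(j | t j != x) ('X - (t j)%:P).
have px_neq0 : p.[x] != 0.
  rewrite horner_prod prodf_seq_neq0; apply/allP => j _; apply/implyP.
  by rewrite hornerXsubC subr_eq0 eq_sym.
move/(_ p); rewrite (bigID (fun j => t j == x)) /= [X in _ + X]big1 ?addr0.
  under eq_bigr => j /eqP tjx do rewrite tjx.
  by rewrite -mulr_sumr => /eqP; rewrite mulf_eq0 (negPf px_neq0) => /eqP.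
move=> j tj_neq_x; rewrite horner_prod (bigD1 j) //=.
by rewrite hornerXsubC subrr mul0r mul0r.
Qed.

Lemma prod_one_sub_pair (R : comNzRingType) (I : finType) (D : {set I})
    (u : I -> R) e :
  #|D| = 2 -> \sum_(j in D) u j = 0 ->
  2%:R * \prod_(j in D) (1 - e * u j) = 2%:R - e ^+ 2 * \sum_(j in D) u j ^+ 2.
Proof.
move/eqP/cards2P => [x [y [neq_xy ->]]].
have x_notin_y : x \notin [set y] by rewrite in_set1.
rewrite !big_setU1 //= !big_set1 => /eqP; rewrite addr_eq0 => /eqP ->.
ring.
Qed.

Section DoubledSpectrum.
Variables (F : fieldType) (m k : nat) (t : 'I_m -> F) (l : 'I_k -> F).
Hypotheses (l_inj : injective l)
  (char_t : \prod_(j < m) ('X - (t j)%:P) = \prod_(i < k) ('X - (l i)%:P) ^+ 2).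

Local Notation spectrum := [seq l i | i <- enum 'I_k].
Local Notation level i := [set j | t j == l i].

Lemma perm_eq_doubled_spectrum :
  perm_eq [seq t j | j <- enum 'I_m] (spectrum ++ spectrum).
Proof.
apply: prod_XsubC_eq; rewrite big_cat !big_map.
by have := char_t; rewrite prodrXl expr2.
Qed.

Lemma card_level i : #|level i| = 2.
Proof.
have := perm_eq_doubled_spectrum => /permP/(_ (pred1 (l i))).
rewrite count_cat !count_map cardsE cardE /enum_mem size_filter -enumT => ->.
rewrite (@eq_count _ _ (pred1 i)) => [|i']; last by rewrite /= (inj_eq l_inj).
by rewrite enumP.
Qed.

Lemma big_partition_level (R : Type) (idx : R) (op : Monoid.com_law idx)
    (G : 'I_m -> R) :
  \big[op/idx]_j G j = \big[op/idx]_i \big[op/idx]_(j in level i) G j.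
Proof.
have /fin_all_exists [cl t_cl] j : exists i, t j = l i.
  have : t j \in spectrum ++ spectrum.
    by rewrite -(perm_mem perm_eq_doubled_spectrum) map_f ?mem_enum.
  by rewrite mem_cat orbb => /mapP [i _ ->]; exists i.
rewrite (partition_big cl predT) //; apply: eq_bigr => i _.
by apply: eq_bigl => j; rewrite inE t_cl (inj_eq l_inj).
Qed.

Lemma sum_horner_sqr_level (u : 'I_m -> F) (p : {poly F}) :
  \sum_j p.[t j] * u j ^+ 2 = \sum_i p.[l i] * \sum_(j in level i) u j ^+ 2.
Proof.
rewrite big_partition_level; apply: eq_bigr => i _; rewrite mulr_sumr.
by apply: eq_bigr => j; rewrite inE => /eqP ->.
Qed.

Lemma prod_one_sub_level (u : 'I_m -> F) e :
  (forall p : {poly F}, \sum_j p.[t j] * u j = 0) ->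
  2%:R ^+ k * \prod_j (1 - e * u j) =
    \prod_i (2%:R - e ^+ 2 * \sum_(j in level i) u j ^+ 2).
Proof.
move=> orth; rewrite big_partition_level -[k in 2%:R ^+ k]card_ord -prodr_const.
rewrite -big_split /=; apply: eq_bigr => i _; apply: prod_one_sub_pair.
  exact: card_level.
rewrite (eq_bigl (fun j => t j == l i)) => [|j]; last by rewrite inE.
exact: level_sum_eq0.
Qed.

End DoubledSpectrum.

Lemma big_ord3 (R : Type) (idx : R) (op : Monoid.law idx) (G : 'I_3 -> R) :
  \big[op/idx]_(i < 3) G i = op (op (G o1) (G o2)) (G o3).
Proof.
rewrite !big_ord_recr big_ord0 Monoid.mul1m.
by congr (op (op (G _) (G _)) (G _)); apply: val_inj.
Qed.

Lemma prod_one_sub_three_levels (F : fieldType) (t u : 'I_6 -> F) (l : 'I_3 -> F)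
    (p : 'I_3 -> {poly F}) e :
  (2%:R : F) != 0 -> injective l ->
  \prod_(j < 6) ('X - (t j)%:P) = \prod_(i < 3) ('X - (l i)%:P) ^+ 2 ->
  (forall r : {poly F}, \sum_j r.[t j] * u j = 0) ->
  (forall i i', (p i).[l i'] = if i == i' then -1 else 1) ->
  let q i := 8%:R^-1 * \sum_j (p i).[t j] * u j ^+ 2 in
  \prod_j (1 - e * u j) =
    (1 - 2%:R * e ^+ 2 * (q o2 + q o3)) *
    (1 - 2%:R * e ^+ 2 * (q o1 + q o3)) *
    (1 - 2%:R * e ^+ 2 * (q o1 + q o2)).
Proof.
move=> two_neq0 l_inj char_t orth interp q.
have := prod_one_sub_level l_inj char_t e orth.
rewrite /q !(sum_horner_sqr_level l_inj char_t) !big_ord3 !interp /=.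
have eight : (8%:R : F) = 2%:R ^+ 3 by rewrite -natrX.
move/(canRL (mulKf (expf_neq0 3 two_neq0))) => ->.
by field; rewrite eight expf_neq0.
Qed.

Lemma trmx_Jmx (R : nzRingType) : (Jmx R)^T = - Jmx R.
Proof.
apply/matrixP => i j; rewrite !mxE.
case: i j => [[|[|[|[|[|[|i]]]]]] Hi] // [[|[|[|[|[|[|j]]]]]] Hj] //=;
  by rewrite ?oppr0 ?opprK.
Qed.

Lemma trmx_hessH (R : comNzRingType) c (x : 'I_6 -> R) : (hessH c x)^T = hessH c x.
Proof.
apply/matrixP => a b; rewrite !mxE; apply: eq_bigr => k _.
by congr (_ * _); ring.
Qed.

Lemma Bmx_horner (R : comNzRingType) (A : 'M[R]_6) a b d :
  Bmx A a b d = horner_mx A (a%:P + b *: 'X + d *: 'X^2).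
Proof.
by rewrite /Bmx !rmorphD /= !linearZ /= rmorphXn /= horner_mx_C horner_mx_X expr2.
Qed.

Lemma skew_hamiltonian_horner_mx (R : comNzRingType) n (A J : 'M[R]_n.+1) p :
  A^T *m J = J *m A -> (horner_mx A p)^T *m J = J *m horner_mx A p.
Proof. by rewrite trmx_horner_mx; apply: horner_mx_intertwine. Qed.

Lemma skew_hamiltonian_commute (R : comNzRingType) n (A J S : 'M[R]_n) :
  A^T *m J = J *m A -> A *m S = S *m A^T -> A *m (J *m S)^T = (J *m S)^T *m A.
Proof.
move=> AJ AS; apply: trmx_inj; rewrite !trmx_mul !trmxK.
by rewrite -mulmxA -AS mulmxA AJ mulmxA.
Qed.

Theorem mainTheorem16 (C : numClosedFieldType)
  (A : 'M[C]_6) (c : 'I_6 -> 'I_6 -> 'I_6 -> C)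
  (lam al be ga : 'I_3 -> C)
  (hAreal : forall i j, A i j \is Num.real)
  (hskew : A^T *m Jmx C = Jmx C *m A)
  (hcreal : forall i j k, c i j k \is Num.real)
  (hcomm : forall x : 'I_6 -> C, (forall i, x i \is Num.real) ->
             A *m hessH c x = hessH c x *m A^T)
  (hchar : char_poly A = \prod_(i < 3) ('X - (lam i)%:P) ^+ 2)
  (hdist : forall i j, i != j -> lam i != lam j)
  (hinterp : forall i j, al i + be i * lam j + ga i * lam j ^+ 2 = if i == j then -1 else 1)
  (hdet : exists x : 'I_6 -> C, (forall i, x i \is Num.real) /\ \det (f0jac c x) != 0) :
  forall (x : 'I_6 -> C) (eps : C), (forall i, x i \is Num.real) -> eps \is Num.real ->
    let q i := qfun (Bmx A (al i) (be i) (ga i)) c x in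
    \det (1%:M - eps *: f0jac c x) =
      (1 - 2%:R * eps ^+ 2 * (q o2 + q o3)) *
      (1 - 2%:R * eps ^+ 2 * (q o1 + q o3)) *
      (1 - 2%:R * eps ^+ 2 * (q o1 + q o2)).
Proof.
move=> x eps x_real _ q; set M := f0jac c x; set N := M^T.
have commAN : A *m N = N *m A by apply: skew_hamiltonian_commute => //; exact: hcomm.
have [P /unitarymx_unit P_unit /andP [trigA trigN]] := cotrigonalization2 commAN.
have lam_inj : injective lam.
  by move=> i j /eqP; apply: contraTeq; exact: hdist.
have orth r : \sum_j r.[conjmx P A j j] * conjmx P N j j = 0.
  rewrite -(mxtrace_horner_mul_trig P_unit trigA trigN).
  apply: mxtrace_skew_sym_mul (trmx_Jmx C) (trmx_hessH c x) _.
  exact: skew_hamiltonian_horner_mx.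
have -> : \det (1%:M - eps *: M) = \prod_j (1 - eps * conjmx P N j j).
  by rewrite -det_tr linearB /= trmx1 linearZ /= (det_scalar_sub_trig P_unit trigN).
have q_eq i : q i = 8%:R^-1 * \sum_j
    ((al i)%:P + be i *: 'X + ga i *: 'X^2).[conjmx P A j j] * conjmx P N j j ^+ 2.
  rewrite /q /qfun -/M -mxtrace_tr trmx_mul trmxK trmx_mul -/N Bmx_horner.
  by rewrite (mxtrace_sqr_mul_horner_trig P_unit trigA trigN).
rewrite !q_eq; apply: (prod_one_sub_three_levels (l := lam)
  (t := fun j => conjmx P A j j) (p := fun i => (al i)%:P + be i *: 'X + ga i *: 'X^2)) => //.
- by rewrite pnatr_eq0.
- by rewrite -(char_poly_trig_conjmx P_unit trigA).
- by move=> i j; rewrite -hinterp !hornerE.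
Qed.
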